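(* Fix a finite relational schema $\sigma$ and an integer $d\geq 2$. Let $\epsilon\in(0,1]$, $r\in\mathbb{N}$, and let $\mathcal{D}$ be a $\sigma$-database belonging to a class $\mathbf{C}$ of $\sigma$-databases of degree at most $d$ such that $\operatorname{h}_r(\mathbf{C})$ is semilinear, written as $\operatorname{h}_r(\mathbf{C})=M_1\cup\dots\cup M_m$ with $m\in\mathbb{N}$ and, for each $i\in[m]$, $M_i=\{\bar v_0^i+a_1\bar v_1^i+\dots+a_{k_i}\bar v_{k_i}^i\mid a_1,\dots,a_{k_i}\in\mathbb{N}\}$ where $\bar v_0^i,\dots,\bar v_{k_i}^i\in\mathbb{N}^{\operatorname{c}(r)}$. Let $c:=\operatorname{c}(r)$, $k:=\max_{i\in[m]}k_i+1$ and $v:=\max_{i\in[m]}\max_{0\leq j\leq k_i}\|\bar v_j^i\|_1$. Then there exists a $\sigma$-database $\mathcal{D}_0$ such that $\|\operatorname{dv}_r(\mathcal{D})-\operatorname{dv}_r(\mathcal{D}_0)\|_1\leq\epsilon$ and $|D_0|\leq kv\left(\frac{3ckv}{\epsilon}+2\right)$.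
   Context: A schema $\sigma$ is a finite set of relation names with arities in $\mathbb{N}_{\geq 1}$. A $\sigma$-database $\mathcal{D}$ has a finite domain $D$ and a relation $R^{\mathcal{D}}\subseteq D^{\operatorname{ar}(R)}$ for each $R\in\sigma$. The Gaifman graph has vertex set $D$ and an edge between distinct $a,b$ whenever some tuple contains both. The degree of an element is the number of tuples containing it; the degree of $\mathcal{D}$ is the maximum. $N_r(a)$ is the set of elements at Gaifman distance at most $r$ from $a$; the $r$-neighbourhood of $a$ is $(\mathcal{D}[N_r(a)],a)$ (induced sub-database with centre $a$); an $r$-type is a centre-preserving isomorphism class of $r$-neighbourhoods; $\operatorname{c}(r)$ is the number of $r$-types of degree at most $d$ over $\sigma$. $\operatorname{h}_r(\mathcal{D})\in\mathbb{N}^{\operatorname{c}(r)}$ counts the elements of each $r$-type; $\operatorname{dv}_r(\mathcal{D})=\operatorname{h}_r(\mathcal{D})/|D|$; $\operatorname{h}_r(\mathbf{C})=\{\operatorname{h}_r(\mathcal{D})\mid\mathcal{D}\in\mathbf{C}\}$. A set is semilinear if it is a finite union of linear sets $\{\bar v_0+\sum a_j\bar v_j\mid a_j\in\mathbb{N}\}$. *)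

From HB Require Import structures.
From mathcomp Require Import all_boot all_order all_algebra.
From mathcomp Require Import boolp reals.
Set Implicit Arguments. Unset Strict Implicit. Unset Printing Implicit Defensive.
Import Order.TTheory GRing.Theory Num.Theory.

Section Databases.
Variables (S : finType) (ar : S -> nat).

Definition tup (T : Type) := {s : S & (ar s).-tuple T}.

Definition tmap (T1 T2 : Type) (f : T1 -> T2) (t : tup T1) : tup T2 :=
  existT _ (projT1 t) (map_tuple f (projT2 t)).

Record database := Database {
  dom : finType;
  rel : {set {s : S & (ar s).-tuple dom}} }.

Arguments dom : clear implicits.
Definition deg (D : database) (a : dom D) : nat :=
  #|[set t in rel D | a \in (projT2 t : seq _)]|.

Definition deg_le (D : database) (d : nat) : bool := [forall a, @deg D a <= d].

Definition gadj (D : database) (a b : dom D) : bool :=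
  (a != b) && [exists t in rel D, (a \in (projT2 t : seq _)) && (b \in (projT2 t : seq _))].

Fixpoint ball (D : database) (n : nat) (a : dom D) : {set dom D} :=
  match n with
  | 0 => [set a]
  | n'.+1 => ball n' a :|: [set y | [exists x in ball n' a, @gadj D x y]]
  end.

Lemma ball_center (D : database) (n : nat) (a : dom D) : a \in ball n a.
Proof. elim: n => [|n IH] /=; first by rewrite in_set1. by rewrite in_setU IH. Qed.

Definition induced (D : database) (X : {set dom D}) : database :=
  @Database {x : dom D | x \in X} [set t | tmap val t \in rel D].

Record pdb := Pdb { pd : database; center : dom (pd) }.

Definition nbhd (D : database) (r : nat) (a : dom D) : pdb :=
  @Pdb (induced (ball r a)) (exist _ a (ball_center r a)).

Definition piso (P1 P2 : pdb) : bool :=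
  [exists f : {ffun dom (pd P1) -> dom (pd P2)},
    [&& injectiveb f, #|dom (pd P1)| == #|dom (pd P2)|,
        f (center P1) == center P2 &
        [forall t, (t \in rel (pd P1)) == (tmap f t \in rel (pd P2))]]].

(* Representatives of r-types: pointed databases on 'I_n, n <= Nmax.
   Nmax = (d * maxar + 1)^r bounds the size of any r-neighbourhood of degree <= d. *)
Definition maxar : nat := \max_(s : S) ar s.
Definition Nmax (d r : nat) : nat := (d * maxar + 1) ^ r.

Definition Rep (d r : nat) : finType :=
  {n : 'I_(Nmax d r).+1 & ({set tup 'I_n} * 'I_n)%type}.

Definition pdb_of (d r : nat) (p : Rep d r) : pdb :=
  @Pdb (@Database 'I_(projT1 p) (projT2 p).1) (projT2 p).2.

Definition is_type_rep (d r : nat) (p : Rep d r) : Prop :=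
  deg_le (pd (pdb_of p)) d /\
  exists (D : database) (a : dom D), piso (nbhd r a) (pdb_of p).

Definition rtypes (d r : nat) : {set {set Rep d r}} :=
  [set X | `[< exists p : Rep d r, is_type_rep p /\
                 X = [set q | piso (pdb_of q) (pdb_of p)] >]].

Definition rtype (d r : nat) : finType := {X : {set Rep d r} | X \in rtypes d r}.

Definition ctypes (d r : nat) : nat := #|rtype d r|.

Definition hvec (d r : nat) (D : database) : {ffun rtype d r -> nat} :=
  [ffun X : rtype d r => #|[set a : dom D | [exists p in (val X : {set Rep d r}), piso (nbhd r a) (@pdb_of d r p)]]|].

Definition dvec (R : realType) (d r : nat) (D : database) (X : rtype d r) : R :=
  ((hvec d r D X)%:R / #|dom D|%:R)%R.

Definition norm1 (d r : nat) (w : {ffun rtype d r -> nat}) : nat := \sum_X w X.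

End Databases.

From Pilot Require Import Defs.
From HB Require Import structures.
From mathcomp Require Import all_boot all_order all_algebra.
From mathcomp Require Import boolp reals.
From mathcomp Require Import ring lra zify.
Import Order.TTheory GRing.Theory Num.Theory.
Set Implicit Arguments. Unset Strict Implicit. Unset Printing Implicit Defensive.

(* Write h_r(D) = v0 + sum_j a_j g_j inside one of the linear sets.  Rounding
   every coefficient down to a multiple of q gives h_r(D0) = v0 + sum_j (a_j / q) g_j
   for some D0 in C, and q h_r(D0) is within (q - 1) k v of h_r(D) in l1-norm.
   Since every element has exactly one r-type, |D| = |h_r(D)|_1, so dv_r is
   h_r normalised, which is invariant under scaling; hence
   |dv_r(D) - dv_r(D0)|_1 <= 2 (q - 1) k v / |D|, while |D0| <= v + |D| / q.
   The choice q = floor(eps |D| / 2kv) + 1 makes the former at most eps and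
   the latter below v + 2kv / eps. *)

Lemma card_bigcup_leq (I T : finType) (P : pred I) (F : I -> {set T}) :
  #|\bigcup_(i | P i) F i| <= \sum_(i | P i) #|F i|.
Proof.
elim/big_rec2: _ => [|i x y _ IH]; first by rewrite cards0.
by apply: leq_trans (leq_card_setU _ _) _; rewrite leq_add2l.
Qed.

Section Databases.
Variables (S : finType) (ar : S -> nat).

Lemma tmap_comp (A B C : Type) (f : A -> B) (g : B -> C) (t : tup ar A) :
  tmap g (tmap f t) = tmap (g \o f) t.
Proof. by case: t => s u; congr existT; apply: val_inj; rewrite /= map_comp. Qed.

Lemma eq_tmap (A B : Type) (f g : A -> B) : f =1 g -> @tmap S ar A B f =1 tmap g.
Proof. by move=> fg [s u]; congr existT; apply: val_inj; rewrite /= (eq_map fg). Qed.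

Lemma tmap_id (A : Type) (t : tup ar A) : tmap id t = t.
Proof. by case: t => s u; congr existT; apply: val_inj; rewrite /= map_id. Qed.

Lemma tmap_inj (A B : eqType) (f : A -> B) :
  injective f -> injective (@tmap S ar A B f).
Proof.
move=> f_inj [s1 u1] [s2 u2] eq_t; have /= s12 := existT_inj1 eq_t; subst s2.
have u12 := existT_inj2 eq_t; congr existT; apply: val_inj.
exact: inj_map f_inj _ _ (congr1 val u12).
Qed.

Lemma piso_refl (P : pdb ar) : piso P P.
Proof.
apply/existsP; exists [ffun x => x]; rewrite ffunE eqxx /=.
apply/and3P; split => //; first by apply/injectiveP => x y; rewrite !ffunE.
apply/forallP => t; rewrite (@eq_tmap _ _ _ id) ?tmap_id // => x; exact: ffunE.
Qed.

Lemma piso_trans (P1 P2 P3 : pdb ar) : piso P1 P2 -> piso P2 P3 -> piso P1 P3.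
Proof.
move=> /existsP [f /and4P [/injectiveP f_inj /eqP card12 /eqP f_c /forallP f_rel]].
move=> /existsP [g /and4P [/injectiveP g_inj /eqP card23 /eqP g_c /forallP g_rel]].
apply/existsP; exists [ffun x => g (f x)]; apply/and4P; split.
- by apply/injectiveP => x y; rewrite !ffunE => /g_inj /f_inj.
- by rewrite card12 card23.
- by rewrite ffunE f_c g_c.
- apply/forallP => t; rewrite (eqP (f_rel t)) (eqP (g_rel _)) tmap_comp.
  by rewrite (@eq_tmap _ _ _ [ffun x => g (f x)]) // => x; rewrite ffunE.
Qed.

Lemma piso_sym (P1 P2 : pdb ar) : piso P1 P2 -> piso P2 P1.
Proof.
move=> /existsP [f /and4P [/injectiveP f_inj /eqP card12 /eqP f_c /forallP f_rel]].
have [g fK gK] : bijective f by apply: inj_card_bij f_inj _; rewrite card12.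
apply/existsP; exists [ffun y => g y]; apply/and4P; split.
- by apply/injectiveP => x y; rewrite !ffunE => /(congr1 f); rewrite !gK.
- by rewrite card12.
- by rewrite ffunE -f_c fK.
- apply/forallP => t; rewrite (@eq_tmap _ _ _ g); last by move=> x; rewrite ffunE.
  by rewrite (eqP (f_rel _)) tmap_comp (@eq_tmap _ _ _ id) ?tmap_id.
Qed.

Variable d : nat.

Lemma card_gadj_le (D : database ar) (x : dom D) :
  deg_le D d -> #|[set y | gadj x y]| <= d * maxar ar.
Proof.
move=> /forallP /(_ x) deg_x.
set Tx := [set t in Defs.rel D | x \in (projT2 t : seq _)].
have sub : [set y | gadj x y] \subset \bigcup_(t in Tx) [set y | y \in (projT2 t : seq _)].
  apply/subsetP => y; rewrite inE => /andP [_ /existsP [t /and3P [tD xt yt]]].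
  by apply/bigcupP; exists t; rewrite ?inE ?tD ?xt ?yt.
apply: leq_trans (subset_leq_card sub) _; apply: leq_trans (card_bigcup_leq _ _) _.
apply: (@leq_trans (\sum_(t in Tx) maxar ar)); last first.
  by rewrite sum_nat_const leq_mul.
apply: leq_sum => t _; rewrite cardsE; apply: leq_trans (card_size _) _.
by rewrite size_tuple; apply: leq_bigmax.
Qed.

Lemma card_ball_le (D : database ar) (r : nat) (a : dom D) :
  deg_le D d -> #|ball r a| <= Nmax ar d r.
Proof.
move=> degD; elim: r => [|n IH] /=; first by rewrite cards1.
have sub : [set y | [exists x in ball n a, gadj x y]] \subset
           \bigcup_(x in ball n a) [set y | gadj x y].
  apply/subsetP => y; rewrite inE => /existsP [x /andP [xb gxy]].
  by apply/bigcupP; exists x => //; rewrite inE.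
apply: leq_trans (leq_card_setU _ _) _.
apply: (@leq_trans (#|ball n a| + #|ball n a| * (d * maxar ar))).
  rewrite leq_add2l; apply: leq_trans (subset_leq_card sub) _.
  apply: leq_trans (card_bigcup_leq _ _) _.
  by rewrite -sum_nat_const; apply: leq_sum => x _; apply: card_gadj_le.
by rewrite -{1}(muln1 #|ball n a|) -mulnDr addnC /Nmax expnS mulnC leq_mul.
Qed.

Variable r : nat.

Definition nbhd_rep (D : database ar) (a : dom D)
    (small : #|dom (pd (nbhd r a))| < (Nmax ar d r).+1) : Rep ar d r :=
  existT (fun n : 'I_(Nmax ar d r).+1 => ({set tup ar 'I_n} * 'I_n)%type) (Ordinal small)
    ([set t | tmap enum_val t \in Defs.rel (pd (nbhd r a))], enum_rank (center (nbhd r a))).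

Lemma piso_nbhd_rep (D : database ar) (a : dom D) small :
  piso (nbhd r a) (pdb_of (@nbhd_rep D a small)).
Proof.
apply/existsP; exists [ffun x => enum_rank x]; rewrite ffunE eqxx /= card_ord eqxx /=.
apply/andP; split; first by apply/injectiveP => x y; rewrite !ffunE => /enum_rank_inj.
apply/forallP => t; rewrite !inE !tmap_comp (@eq_tmap _ _ _ sval) // => x.
by rewrite /= ffunE enum_rankK.
Qed.

Lemma deg_le_nbhd_rep (D : database ar) (a : dom D) small :
  deg_le D d -> deg_le (pd (pdb_of (@nbhd_rep D a small))) d.
Proof.
move=> /forallP degD; apply/forallP => i /=.
pose emb (j : 'I_#|dom (pd (nbhd r a))|) := sval (enum_val j).
have emb_inj : injective emb by move=> x y /val_inj /enum_val_inj.
apply: leq_trans (degD (emb i)); rewrite /deg -(card_imset _ (tmap_inj emb_inj)).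
apply: subset_leq_card; apply/subsetP => t' /imsetP [t].
rewrite !inE /= tmap_comp => /andP [tD it] ->.
by rewrite tD; apply: map_f.
Qed.

Lemma nbhd_rtype_unique (D : database ar) (a : dom D) :
  deg_le D d -> exists X0 : rtype ar d r, forall X : rtype ar d r,
    [exists p in (val X : {set Rep ar d r}), piso (nbhd r a) (pdb_of p)] = (X == X0).
Proof.
move=> degD.
have small : #|dom (pd (nbhd r a))| < (Nmax ar d r).+1.
  by rewrite ltnS /= card_sig; apply: card_ball_le.
pose p := nbhd_rep small.
have p_type : [set q | piso (pdb_of q) (pdb_of p)] \in rtypes ar d r.
  rewrite inE; apply/asboolP; exists p; split => //; split.
    exact: deg_le_nbhd_rep.
  by exists D, a; apply: piso_nbhd_rep.
exists (exist (fun Y => Y \in rtypes ar d r) _ p_type) => X; apply/idP/eqP => [|->]; last first.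
  by apply/existsP; exists p; rewrite /= inE piso_refl piso_nbhd_rep.
move=> /existsP [p' /andP [p'X a_p']].
have := valP X; rewrite inE => /asboolP [p1 [_ X_p1]].
move: p'X; rewrite X_p1 inE => p'_p1.
have p_p1 : piso (pdb_of p) (pdb_of p1).
  apply: piso_trans p'_p1; apply: piso_trans a_p'; apply/piso_sym/piso_nbhd_rep.
apply: val_inj; rewrite /= X_p1; apply/setP => q; rewrite !inE.
by apply/idP/idP => q_p; [apply: piso_trans q_p (piso_sym p_p1) | apply: piso_trans q_p p_p1].
Qed.

Lemma card_dom_hvec (D : database ar) : deg_le D d -> #|dom D| = norm1 (hvec d r D).
Proof.
move=> degD; rewrite /norm1.
under eq_bigr => X _ do rewrite ffunE -sum1_card big_mkcond /=.
rewrite exchange_big /= -sum1_card; apply: eq_bigr => a _.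
have [X0 X0_uniq] := nbhd_rtype_unique a degD.
rewrite (eq_bigr (fun X => (X == X0 : nat))); last by move=> X _; rewrite inE X0_uniq.
by rewrite -big_mkcond big_pred1_eq.
Qed.

Lemma ctypes_gt0 (D : database ar) : deg_le D d -> 0 < #|dom D| -> 0 < ctypes ar d r.
Proof.
move=> degD /card_gt0P [a _]; have [X0 _] := nbhd_rtype_unique a degD.
by apply/card_gt0P; exists X0.
Qed.

End Databases.

Section Rounding.
Variables (I : finType) (K : nat) (u : I -> nat) (g : 'I_K -> I -> nat).

Definition lcomb (a : 'I_K -> nat) (X : I) : nat := u X + \sum_(j < K) a j * g j X.

Lemma sum_lcomb (a : 'I_K -> nat) :
  \sum_X lcomb a X = \sum_X u X + \sum_(j < K) a j * \sum_X g j X.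
Proof.
rewrite big_split /= exchange_big; congr addn.
by apply: eq_bigr => j _; rewrite big_distrr.
Qed.

Variables (a : 'I_K -> nat) (q : nat).
Hypothesis q_gt0 : 0 < q.

Lemma lcomb_divn_dist (R : realDomainType) (X : I) :
  (`|(lcomb a X)%:R - (q * lcomb (fun j => a j %/ q) X)%N%:R|
     <= (q.-1 * u X + \sum_(j < K) (a j %% q) * g j X)%N%:R :> R)%R.
Proof.
have a_split : \sum_(j < K) a j * g j X =
    q * \sum_(j < K) (a j %/ q) * g j X + \sum_(j < K) (a j %% q) * g j X.
  rewrite big_distrr -big_split; apply: eq_bigr => j _ /=.
  by rewrite {1}(divn_eq (a j) q) mulnDl -mulnA mulnCA.
rewrite ler_distl -!natrD lerBlDr -natrD !ler_nat /lcomb a_split mulnDr.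
by case: q q_gt0 => // q' _ /=; lia.
Qed.

Lemma sum_lcomb_divn_dist (R : realDomainType) :
  (\sum_X `|(lcomb a X)%:R - (q * lcomb (fun j => a j %/ q) X)%N%:R|
     <= (q.-1 * (\sum_X u X + \sum_(j < K) \sum_X g j X))%N%:R :> R)%R.
Proof.
apply: le_trans (ler_sum _ (fun X _ => lcomb_divn_dist R X)) _.
rewrite -natr_sum ler_nat big_split /= -big_distrr /= exchange_big.
rewrite mulnDr leq_add2l big_distrr leq_sum // => j _.
by rewrite -big_distrr leq_mul2r -ltnS prednK ?ltn_pmod ?orbT.
Qed.

Lemma sum_lcomb_divn_le :
  q * \sum_X lcomb (fun j => a j %/ q) X <= q * \sum_X u X + \sum_X lcomb a X.
Proof.
rewrite !sum_lcomb mulnDr leq_add2l big_distrr /=; apply: leq_trans (leq_addl _ _).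
by apply: leq_sum => j _; rewrite mulnA leq_mul2r mulnC leq_divM orbT.
Qed.

End Rounding.

Local Open Scope ring_scope.

Lemma normalized_l1_dist_le (R : realFieldType) (I : finType) (x z : I -> R) :
  (forall i, 0 <= x i) -> (forall i, 0 <= z i) -> 0 < \sum_i x i ->
  \sum_i `|x i / \sum_j x j - z i / \sum_j z j| <= 2 * (\sum_i `|x i - z i|) / \sum_j x j.
Proof.
move=> x_ge0 z_ge0; set X := \sum_j x j; set Z := \sum_j z j => X_gt0.
have Z_ge0 : 0 <= Z by apply: sumr_ge0.
have dist_ge0 : 0 <= \sum_i `|x i - z i| by apply: sumr_ge0.
have [Z0 | Z_neq0] := eqVneq Z 0.
  have z0 i : z i = 0 by apply: (psumr_eq0P _ Z0).
  under eq_bigr do rewrite z0 mul0r subr0 ger0_norm ?divr_ge0 ?(ltW X_gt0) //.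
  under [X in _ <= 2 * X / _]eq_bigr do rewrite z0 subr0 ger0_norm //.
  rewrite -mulr_suml -/X ler_pM2r ?invr_gt0 //; lra.
have Z_gt0 : 0 < Z by rewrite lt_def Z_neq0.
(* x/X - z/Z = (x - z)/X + z (Z - X)/(X Z), and the second terms sum to |Z - X|/X *)
have split_i i : `|x i / X - z i / Z| <= `|x i - z i| / X + z i * (`|Z - X| / (X * Z)).
  have -> : x i / X - z i / Z = (x i - z i) / X + z i * ((Z - X) / (X * Z)).
    by field; rewrite !gt_eqF.
  apply: le_trans (ler_normD _ _) _.
  rewrite normrM normfV (ger0_norm (ltW X_gt0)) normrM (ger0_norm (z_ge0 i)).
  by rewrite normrM normfV (ger0_norm (mulr_ge0 (ltW X_gt0) Z_ge0)).
apply: le_trans (ler_sum _ (fun i _ => split_i i)) _.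
rewrite big_split /= -!mulr_suml -/Z.
have -> : Z * (`|Z - X| / (X * Z)) = `|Z - X| / X by field; rewrite !gt_eqF.
have ZX_le : `|Z - X| <= \sum_i `|x i - z i|.
  rewrite /Z /X -sumrB; apply: le_trans (ler_norm_sum _ _ _) _.
  by apply: ler_sum => i _; rewrite distrC.
by rewrite mulr_natl mulr2n mulrDl lerD2l ler_pM2r ?invr_gt0.
Qed.

Lemma truncn_div_itv (R : archiRealFieldType) (x : R) (N : nat) : 0 <= x -> (0 < N)%N ->
  ((Num.truncn (x / N%:R) * N)%:R <= x) && (x < ((Num.truncn (x / N%:R)).+1 * N)%:R).
Proof.
move=> x_ge0 N_gt0; have N_gt0' : 0 < N%:R :> R by rewrite ltr0n.
have /andP [lo hi] := truncn_itv (divr_ge0 x_ge0 (ltW N_gt0')).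
by rewrite !natrM -ler_pdivlMr // -ltr_pdivrMr // lo hi.
Qed.

Lemma dvec_dist_le (R : realType) (S : finType) (ar : S -> nat) (d r q : nat)
    (D D' : database ar) :
  deg_le D d -> deg_le D' d -> (0 < #|dom D|)%N -> (0 < q)%N ->
  \sum_(X : rtype ar d r) `|dvec R D X - dvec R D' X| <=
    2 * (\sum_X `|(hvec d r D X)%:R - (q * hvec d r D' X)%N%:R|) / #|dom D|%:R.
Proof.
move=> degD degD' D_gt0 q_gt0.
pose x X : R := (hvec d r D X)%:R; pose z X : R := (q * hvec d r D' X)%N%:R.
have sum_x : \sum_Y x Y = #|dom D|%:R by rewrite -natr_sum -/(norm1 _) -(card_dom_hvec r degD).
have dvecD' X : dvec R D' X = z X / \sum_Y z Y.
  rewrite /dvec (card_dom_hvec r degD') /norm1 /z natr_sum.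
  under [in RHS]eq_bigr do rewrite natrM.
  by rewrite -mulr_sumr natrM invfM mulrACA divff ?mul1r // pnatr_eq0 -lt0n.
under eq_bigr do rewrite dvecD' /dvec -sum_x.
rewrite -sum_x; apply: normalized_l1_dist_le => *; by rewrite ?ler0n ?sum_x ?ltr0n.
Qed.

Lemma card_bound_of_scaled_lt (R : realFieldType) (eps : R) (c k v n : nat) :
  0 < eps -> (0 < c)%N -> (0 < k)%N ->
  eps * n%:R < eps * v%:R + (2 * k * v)%N%:R ->
  n%:R <= (k * v)%:R * (3%:R * (c * k * v)%:R / eps + 2%:R).
Proof.
move=> eps_gt0 c_gt0 k_gt0 n_lt.
have v_gt0 : (0 < v)%N.
  rewrite lt0n; apply: contraTneq n_lt => ->.
  by rewrite mulr0 muln0 add0r -leNgt mulr_ge0 // ltW.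
rewrite -(ler_pM2l eps_gt0); apply/ltW/(lt_le_trans n_lt).
have -> : eps * ((k * v)%:R * (3%:R * (c * k * v)%:R / eps + 2%:R)) =
          (3 * (k * v) * (c * k * v))%N%:R + eps * (2 * k * v)%N%:R.
  by rewrite !natrM; field; rewrite gt_eqF.
rewrite addrC lerD ?ler_pM2l ?ler_nat ?leq_pmull ?muln_gt0 ?k_gt0 //.
rewrite -mulnA -[X in (X <= _)%N]muln1 leq_mul ?leq_mul //.
by rewrite !muln_gt0 c_gt0 k_gt0.
Qed.

Section Approximation.
Variables (R : realType) (S : finType) (ar : S -> nat) (d r : nat).
Variables (K : nat) (u : {ffun rtype ar d r -> nat}) (g : 'I_K -> {ffun rtype ar d r -> nat}).
Variables (k v : nat).
Hypotheses (u_le : (norm1 u <= v)%N) (g_le : forall j, (norm1 (g j) <= v)%N) (K_lt : (K < k)%N).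
Variables (D : database ar) (a : 'I_K -> nat).
Hypotheses (degD : deg_le D d) (hD : forall X, hvec d r D X = lcomb u g a X).
Hypothesis D_gt0 : (0 < #|dom D|)%N.
Variables (eps : R).
Hypothesis eps_gt0 : 0 < eps.

Lemma card_dom_lcomb : #|dom D| = (norm1 u + \sum_(j < K) a j * norm1 (g j))%N.
Proof. by rewrite (card_dom_hvec r degD) /norm1 (eq_bigr _ (fun X _ => hD X)) sum_lcomb. Qed.

Lemma norm1_gens_le : (norm1 u + \sum_(j < K) norm1 (g j) <= k * v)%N.
Proof.
apply: (@leq_trans (v + K * v)); last by rewrite -mulSn leq_mul2r K_lt orbT.
rewrite leq_add //; apply: (@leq_trans (\sum_(j < K) v)); first exact: leq_sum.
by rewrite sum_nat_const card_ord.
Qed.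

Lemma gens_bound_gt0 : (0 < v)%N.
Proof.
rewrite lt0n; apply: contraTneq D_gt0 => v0; rewrite -leqNgt card_dom_lcomb.
apply: (@leq_trans (v + \sum_(j < K) a j * v)).
  by rewrite leq_add // leq_sum // => j _; rewrite leq_mul2l g_le orbT.
by rewrite v0 big1 // => j _; rewrite muln0.
Qed.

Definition rounding_factor : nat := (Num.truncn (eps * #|dom D|%:R / (2 * k * v)%N%:R)).+1.
Local Notation q := rounding_factor.

Lemma rounding_factor_itv :
  ((q.-1 * (2 * k * v))%N%:R <= eps * #|dom D|%:R) &&
  (eps * #|dom D|%:R < (q * (2 * k * v))%N%:R).
Proof.
apply: truncn_div_itv; first exact: mulr_ge0 (ltW eps_gt0) (ler0n _ _).
by rewrite !muln_gt0 gens_bound_gt0 (leq_ltn_trans (leq0n K) K_lt).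
Qed.

Variable D' : database ar.
Hypotheses (degD' : deg_le D' d) (hD' : forall X, hvec d r D' X = lcomb u g (fun j => a j %/ q)%N X).

Lemma rounding_dvec_dist_le : \sum_(X : rtype ar d r) `|dvec R D X - dvec R D' X| <= eps.
Proof.
have q_gt0 : (0 < q)%N by [].
apply: le_trans (dvec_dist_le R r degD degD' D_gt0 q_gt0) _.
under eq_bigr do rewrite hD hD'.
have /andP [err_le _] := rounding_factor_itv.
rewrite ler_pdivrMr ?ltr0n // mulrC; apply: le_trans err_le.
apply: le_trans (ler_wpM2r (ler0n _ 2) (sum_lcomb_divn_dist u g a q_gt0 R)) _.
rewrite -natrM ler_nat -mulnA -(mulnA 2 k) (mulnC _ 2) !leq_mul2l.
by rewrite norm1_gens_le !orbT.
Qed.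

Lemma rounding_card_lt : eps * #|dom D'|%:R < eps * v%:R + (2 * k * v)%N%:R.
Proof.
have q_gt0 : (0 < q%:R :> R) by rewrite ltr0n.
have /andP [_ scaled_lt] := rounding_factor_itv.
have card_le : (q * #|dom D'| <= q * norm1 u + #|dom D|)%N.
  rewrite (card_dom_hvec r degD') (card_dom_hvec r degD) /norm1.
  rewrite (eq_bigr _ (fun X _ => hD' X)) (eq_bigr _ (fun X _ => hD X)).
  exact: sum_lcomb_divn_le.
rewrite -(ltr_pM2l q_gt0) mulrCA.
apply: (le_lt_trans (y := eps * (q * norm1 u + #|dom D|)%N%:R)).
  by rewrite ler_pM2l // -natrM ler_nat.
rewrite natrD !mulrDr; apply: ler_ltD; last by rewrite -natrM.
by rewrite natrM mulrCA !ler_pM2l // ler_nat.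
Qed.
End Approximation.

Local Close Scope ring_scope.

Theorem corollary10 (Sg : finType) (ar : Sg -> nat) (Har : forall s, 0 < ar s)
  (d : nat) (Hd : 2 <= d) (R : realType) (eps : R) (Heps0 : (0 < eps)%R)
  (Heps1 : (eps <= 1)%R) (r : nat)
  (C : database ar -> Prop) (HCdeg : forall D, C D -> deg_le D d)
  (D : database ar) (HD : C D)
  (m : nat) (ks : 'I_m -> nat)
  (v0 : 'I_m -> {ffun rtype ar d r -> nat})
  (gens : forall i : 'I_m, 'I_(ks i) -> {ffun rtype ar d r -> nat})
  (Hsemi : forall w : {ffun rtype ar d r -> nat},
      (exists D', C D' /\ @hvec Sg ar d r D' = w) <->
      (exists (i : 'I_m) (a : 'I_(ks i) -> nat),
          forall X, w X = (v0 i X + \sum_(j < ks i) a j * gens i j X)%N)) :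
  let c := ctypes ar d r in
  let k := (\max_(i < m) ks i).+1 in
  let v := \max_(i < m) maxn (norm1 (v0 i))
                              (\max_(j < ks i) norm1 (gens i j)) in
  exists D0 : database ar,
    (\sum_(X : rtype ar d r) `|@dvec Sg ar R d r D X - @dvec Sg ar R d r D0 X| <= eps)%R /\
    ((#|dom D0|)%:R <= (k * v)%:R * (3%:R * (c * k * v)%:R / eps + 2%:R))%R.
Proof.
move=> c k v; have degD := HCdeg D HD.
have [D_empty | D_gt0] := posnP #|dom D|.
  exists D; split; first by rewrite big1 ?ltW // => X _; rewrite subrr normr0.
  rewrite D_empty; apply: mulr_ge0 => //; apply: addr_ge0 => //.
  exact: divr_ge0 (mulr_ge0 (ler0n _ _) (ler0n _ _)) (ltW Heps0).
have [i [a hD]] : exists i (a : 'I_(ks i) -> nat),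
    forall X, hvec d r D X = lcomb (v0 i) (gens i) a X by apply/Hsemi; exists D.
have u_le : (norm1 (v0 i) <= v)%N.
  by apply: leq_trans (leq_bigmax i); apply: leq_maxl.
have g_le j : (norm1 (gens i j) <= v)%N.
  by apply: leq_trans (leq_bigmax i); apply: leq_trans (leq_maxr _ _); apply: leq_bigmax.
have K_lt : (ks i < k)%N by rewrite ltnS; apply: leq_bigmax i.
pose q := rounding_factor k v D eps.
have [D0 [CD0 hD0]] : exists D0, C D0 /\
    hvec d r D0 = [ffun X => lcomb (v0 i) (gens i) (fun j => a j %/ q) X].
  by apply/Hsemi; exists i, (fun j => a j %/ q) => X; rewrite ffunE.
have degD0 := HCdeg _ CD0.
have hD0X X : hvec d r D0 X = lcomb (v0 i) (gens i) (fun j => a j %/ q) X by rewrite hD0 ffunE.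
exists D0; split.
  exact (rounding_dvec_dist_le u_le g_le K_lt degD hD D_gt0 Heps0 degD0 hD0X).
apply: (card_bound_of_scaled_lt Heps0 (ctypes_gt0 r degD D_gt0) (ltn0Sn _)).
exact (rounding_card_lt u_le g_le K_lt degD hD D_gt0 Heps0 degD0 hD0X).
Qed.
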